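(* For every $n\ge3$ with $n\neq6$, $\operatorname{sdim}C_n=2$, while $\operatorname{sdim}C_6=3$.
   Context: $C_n$ is the cycle graph on $n$ vertices. A unit-distance embedding of a graph $G$ in $\mathbb{R}^n$ is an injective map $f$ from the vertex set of $G$ to $\mathbb{R}^n$ such that $|f(u)-f(v)|=1$ for every edge $uv$ and no point $f(w)$ lies on the segment $[f(u),f(v)]$ for an edge $uv$ with $w\notin\{u,v\}$ (edges may cross one another). $G$ admits a spherical embedding of dimension $k$ and radius $r$ if $G$ has a unit-distance embedding in $\mathbb{R}^k$ all of whose vertices lie on a sphere $\{x\in\mathbb{R}^k:|x-c|=r\}$. The spherical dimension $\operatorname{sdim}G$ is the least $k$ such that $G$ admits a spherical embedding of dimension $k$ and some radius $r<1$. *)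

From HB Require Import structures.
From mathcomp Require Import all_boot all_order all_algebra.
From mathcomp Require Import Rstruct.
Set Implicit Arguments. Unset Strict Implicit. Unset Printing Implicit Defensive.
Import Order.TTheory GRing.Theory Num.Theory.
Local Open Scope ring_scope.

Notation RR := Rdefinitions.R.

Definition edist (k : nat) (x y : 'rV[RR]_k) : RR :=
  Num.sqrt (\sum_(i < k) (x ord0 i - y ord0 i) ^+ 2).

Definition on_segment (k : nat) (p a b : 'rV[RR]_k) : Prop :=
  exists t : RR, 0 <= t /\ t <= 1 /\ p = (1 - t) *: a + t *: b.

Definition unit_distance_embedding (V : finType) (adj : rel V) (k : nat)
    (f : V -> 'rV[RR]_k) : Prop :=
  injective f /\
  (forall u v, adj u v -> edist (f u) (f v) = 1) /\
  (forall u v w, adj u v -> w != u -> w != v -> ~ on_segment (f w) (f u) (f v)).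

Definition spherical_embedding (V : finType) (adj : rel V) (k : nat) (r : RR) :
    Prop :=
  exists (f : V -> 'rV[RR]_k) (c : 'rV[RR]_k),
    unit_distance_embedding adj f /\ forall v, edist (f v) c = r.

Definition sph_admits (V : finType) (adj : rel V) (k : nat) : Prop :=
  exists r : RR, r < 1 /\ spherical_embedding adj k r.

Definition sdim_is (V : finType) (adj : rel V) (k : nat) : Prop :=
  sph_admits adj k /\ forall j : nat, (j < k)%N -> ~ sph_admits adj j.

Definition cycle_adj (n : nat) : rel 'I_n :=
  fun i j => (val j == (val i).+1 %% n)%N || (val i == (val j).+1 %% n)%N.
Arguments cycle_adj n : clear implicits.

(* For n <> 6 pick m coprime to n with n/6 < m <= n/2 and place
   vertex j at angle j * (2 pi m / n) on a circle: this star polygon {n/m} has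
   all edges of length 2 rho sin(pi m / n), and the radius rho making them unit
   is < 1 because cos (2 pi m / n) < 1/2.  For C_6 we follow a closed path of
   six edges of the unit cube, which lies on the sphere of radius sqrt 3 / 2.
   In both cases the "no vertex inside an edge" condition is automatic, since
   a chord of a sphere meets the sphere only at its endpoints.

   A sphere in R^0 or R^1 has at most two points.  For C_6 in
   the plane, a unit step between two points of a circle of squared radius s is
   a rotation whose cosine is (s - 1/2)/s and whose sine is determined up to
   sign; a sign change would send the walk back where it was two steps before,
   so an injective closed hexagon turns by one fixed rotation w, a primitive
   sixth root of unity.  Then Re w = 1/2, which forces s = 1. *)

From Stdlib Require Import Reals.
From HB Require Import structures.
From mathcomp Require Import all_boot all_order all_algebra.
From mathcomp Require Import Rstruct complex ring lra zify.
Set Implicit Arguments. Unset Strict Implicit. Unset Printing Implicit Defensive.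
Import Order.TTheory GRing.Theory Num.Theory.
Local Open Scope ring_scope.

Lemma edist_sq k (x y : 'rV[RR]_k) :
  edist x y ^+ 2 = \sum_(i < k) (x ord0 i - y ord0 i) ^+ 2.
Proof. by rewrite /edist sqr_sqrtr // sumr_ge0 // => i _; exact: sqr_ge0. Qed.

Lemma edist_sym k (x y : 'rV[RR]_k) : edist x y = edist y x.
Proof. by rewrite /edist; congr Num.sqrt; apply: eq_bigr => i _; rewrite -sqrrN opprB. Qed.

Lemma edist_eq_sqr k (x y : 'rV[RR]_k) (d : RR) : 0 <= d ->
  edist x y ^+ 2 = d ^+ 2 -> edist x y = d.
Proof. by move=> d0 e; apply/eqP; rewrite -(eqrXn2 (isT : (0 < 2)%N)) ?e ?sqrtr_ge0. Qed.

Lemma edist2 (u v : 'rV[RR]_2) : edist u v ^+ 2 =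
  (u ord0 ord0 - v ord0 ord0) ^+ 2 +
  (u ord0 (lift ord0 ord0) - v ord0 (lift ord0 ord0)) ^+ 2.
Proof. by rewrite edist_sq !big_ord_recl big_ord0 addr0. Qed.

(* A chord of a sphere meets the sphere only at its endpoints: with
   p = (1-t)a + tb, |p-c|^2 = (1-t)|a-c|^2 + t|b-c|^2 - t(1-t)|a-b|^2. *)
Lemma sphere_chord k (a b p c : 'rV[RR]_k) r :
  edist a c = r -> edist b c = r -> edist p c = r -> on_segment p a b ->
  p = a \/ p = b.
Proof.
move=> ha hb hp [t [t0 [t1 ep]]].
have key : t * (1 - t) * \sum_(i < k) (a ord0 i - b ord0 i) ^+ 2 = 0.
  have e i : (t * (1 - t)) * (a ord0 i - b ord0 i) ^+ 2 =
     ((1 - t) * (a ord0 i - c ord0 i) ^+ 2 + t * (b ord0 i - c ord0 i) ^+ 2)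
      - (p ord0 i - c ord0 i) ^+ 2.
    by rewrite ep !mxE; ring.
  rewrite mulr_sumr (eq_bigr _ (fun i _ => e i)) sumrB big_split /= -!mulr_sumr.
  by rewrite -!edist_sq ha hb hp; ring.
move/eqP: key; rewrite !mulf_eq0 subr_eq0 -orbA => /or3P [/eqP t_0|/eqP t_1|/eqP ab].
- by left; rewrite ep t_0; apply/rowP => i; rewrite !mxE; ring.
- by right; rewrite ep -t_1; apply/rowP => i; rewrite !mxE; ring.
have /(_ _ isT) ab_i := psumr_eq0P (fun i _ => sqr_ge0 (a ord0 i - b ord0 i)) ab.
left; rewrite ep; apply/rowP => i; rewrite !mxE.
by have /eqP := ab_i i; rewrite sqrf_eq0 subr_eq0 => /eqP ->; ring.
Qed.

(* An injective map onto a sphere of radius r < 1 sending edges to unit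
   segments is a spherical embedding: by [sphere_chord] no vertex can lie
   inside an edge. *)
Lemma sph_admits_of_sphere (V : finType) (adj : rel V) k (f : V -> 'rV[RR]_k) c r :
  r < 1 -> injective f -> (forall u v, adj u v -> edist (f u) (f v) = 1) ->
  (forall v, edist (f v) c = r) -> sph_admits adj k.
Proof.
move=> r1 inj unit sph; exists r; split => //; exists f, c.
do 3 split => //.
move=> u v w _ wu wv /(sphere_chord (sph u) (sph v) (sph w)) [/inj ew|/inj ew].
  by rewrite ew eqxx in wu.
by rewrite ew eqxx in wv.
Qed.

(* A sphere in R^0 is a point and a sphere in R^1 has at most two points, so a
   graph with three vertices has no spherical embedding of dimension < 2. *)
Lemma no_sph_admits_lt2 (V : finType) (adj : rel V) (u v w : V) j :
  u != v -> u != w -> v != w -> (j < 2)%N -> ~ sph_admits adj j.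
Proof.
move=> uv uw vw hj [r [_ [f [c [[inj _] sph]]]]].
case: j hj f c inj sph => [|[|//]] _ f c inj sph.
  by move/negP: uv; apply; apply/eqP/inj/rowP; case.
pose d t := f t ord0 ord0 - c ord0 ord0.
have d_inj : injective d.
  by move=> t t' /addIr e; apply: inj; apply/rowP => i; rewrite (ord1 i).
have d_sq t : d t ^+ 2 = r ^+ 2 by rewrite -(sph t) edist_sq big_ord1.
have opp t t' : t != t' -> d t = - d t'.
  move=> tt'; have /eqP := etrans (d_sq t) (esym (d_sq t')).
  by rewrite eqf_sqr => /orP [/eqP /d_inj e|/eqP //]; rewrite e eqxx in tt'.
move/negP: vw; apply; apply/eqP/d_inj.
by rewrite (opp v u) 1?eq_sym // (opp w u) 1?eq_sym.
Qed.

Section CircleWalk.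

Variables (n : nat) (x y : nat -> RR) (s : RR).
Hypothesis on_circle : forall i, (i <= n)%N -> x i ^+ 2 + y i ^+ 2 = s.
Hypothesis unit_step :
  forall i, (i < n)%N -> (x i - x i.+1) ^+ 2 + (y i - y i.+1) ^+ 2 = 1.

(* The cross product P_i x P_(i+1): s times the sine of the turning angle. *)
Definition cross (i : nat) := x i * y i.+1 - y i * x i.+1.

Definition walk_point (i : nat) : RR[i] := (x i +i* y i)%C.

Lemma walk_radius_pos : (0 < n)%N -> 0 < s.
Proof.
move=> n0; have := on_circle (leq0n n); have := on_circle n0; have := unit_step n0.
have := sqr_ge0 (x 0%N + x 1%N); have := sqr_ge0 (y 0%N + y 1%N); nra.
Qed.

(* The dot product P_i . P_(i+1) (s times the cosine of the turning angle)
   is the same for every step. *)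
Lemma walk_dot i : (i < n)%N -> x i * x i.+1 + y i * y i.+1 = s - 1 / 2.
Proof.
move=> hi; have := on_circle (ltnW hi); have := on_circle hi; have := unit_step hi.
nra.
Qed.

(* Each step is a rotation: s P_(i+1) = (s - 1/2) P_i + cross i * J P_i,
   where J is the quarter turn. *)
Lemma walk_next i : (i < n)%N ->
  s * x i.+1 = (s - 1 / 2) * x i - cross i * y i /\
  s * y i.+1 = (s - 1 / 2) * y i + cross i * x i.
Proof.
by move=> hi; rewrite -(walk_dot hi) /cross -(on_circle (ltnW hi)); split; ring.
Qed.

(* The turning angle is determined up to sign. *)
Lemma cross_sq i : (i < n)%N -> cross i ^+ 2 = s ^+ 2 - (s - 1 / 2) ^+ 2.
Proof.
move=> hi; rewrite -(walk_dot hi) /cross.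
have -> : s ^+ 2 = (x i ^+ 2 + y i ^+ 2) * (x i.+1 ^+ 2 + y i.+1 ^+ 2).
  by rewrite on_circle ?(ltnW hi) // on_circle // expr2.
ring.
Qed.

Lemma walk_backtrack i : s != 0 -> (i.+1 < n)%N -> cross i.+1 = - cross i ->
  x i.+2 = x i /\ y i.+2 = y i.
Proof.
move=> s0 hi turn; have hi' : (i < n)%N by apply: ltnW.
have ss : s * s = (s - 1 / 2) ^+ 2 + cross i ^+ 2 by rewrite cross_sq //; ring.
have [ex0 ey0] := walk_next hi'; have [ex1 ey1] := walk_next hi.
rewrite turn in ex1 ey1; split; apply: (mulfI (mulf_neq0 s0 s0)).
- transitivity (s * ((s - 1 / 2) * x i.+1 + cross i * y i.+1)).
    by rewrite -mulrA ex1; ring.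
  by rewrite mulrDr mulrCA ex0 mulrCA ey0 ss; ring.
- transitivity (s * ((s - 1 / 2) * y i.+1 - cross i * x i.+1)).
    by rewrite -mulrA ey1; ring.
  by rewrite mulrBr mulrCA ey0 mulrCA ex0 ss; ring.
Qed.

Lemma walk_rotation : s != 0 -> (forall i, (i < n)%N -> cross i = cross 0) ->
  forall k, (k <= n)%N ->
  walk_point k = walk_point 0 * (((s - 1 / 2) / s) +i* (cross 0 / s))%C ^+ k.
Proof.
move=> s0 cross_const; elim=> [|k IH] hk; first by rewrite expr0 mulr1.
rewrite exprSr mulrA -IH ?(ltnW hk) //.
have [ex ey] := walk_next hk; rewrite cross_const // in ex ey.
apply/eqP; rewrite eq_complex /=; apply/andP; split; apply/eqP; apply: (mulfI s0).
  by rewrite ex; field.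
by rewrite ey; field.
Qed.

End CircleWalk.

(* A primitive sixth root of unity has real part 1/2, from
   w^6 - 1 = (w^3 - 1)(w + 1)(w^2 - w + 1). *)
Lemma sixth_root_re (R : realFieldType) (w : R[i]) :
  w ^+ 6 = 1 -> w ^+ 2 != 1 -> w ^+ 3 != 1 -> complex.Re w = 1 / 2.
Proof.
move=> w6 w2 w3.
have : (w ^+ 3 - 1) * (w + 1) * (w ^+ 2 - w + 1) = 0.
  by rewrite -(subrr (1 : R[i])) -{4}w6; ring.
move/eqP; rewrite !mulf_eq0 subr_eq0 (negbTE w3) /= addr_eq0 => /orP [/eqP w_1|].
  by rewrite w_1 sqrrN expr1n eqxx in w2.
case: w {w6 w2 w3} => p q; rewrite expr2 eq_complex /= => /andP [/eqP re /eqP im].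
have : q * (2 * p - 1) = 0 by rewrite -im; ring.
move/eqP; rewrite mulf_eq0 => /orP [/eqP q0|/eqP p12]; last by lra.
by move: re; rewrite q0; have := sqr_ge0 (p - 1 / 2); nra.
Qed.

(* A closed walk of six unit steps on a circle through six distinct points
   lives on the unit circle: its turning angles all agree by
   [walk_backtrack], so it is generated by a primitive sixth root of unity,
   whose real part (s - 1/2)/s must be 1/2. *)
Lemma closed_hexagon_walk (x y : nat -> RR) (s : RR) :
  (forall i, (i <= 6)%N -> x i ^+ 2 + y i ^+ 2 = s) ->
  (forall i, (i < 6)%N -> (x i - x i.+1) ^+ 2 + (y i - y i.+1) ^+ 2 = 1) ->
  x 6%N = x 0%N -> y 6%N = y 0%N ->
  (forall i j, (i < j < 6)%N -> x i = x j -> y i = y j -> False) -> s = 1.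
Proof.
move=> on_circle unit_step x6 y6 distinct.
have s_gt0 := walk_radius_pos on_circle unit_step isT.
have s0 : s != 0 by rewrite gt_eqF.
(* a change of sign in the turning angle would revisit a vertex *)
have cross_const i : (i < 6)%N -> cross x y i = cross x y 0.
  elim: i => [//|i IH] hi; rewrite -IH ?(ltnW hi) //.
  have /eqP := etrans (cross_sq on_circle unit_step hi)
                 (esym (cross_sq on_circle unit_step (ltnW hi))).
  rewrite eqf_sqr => /orP [/eqP //|/eqP turn]; exfalso.
  have [ex ey] := walk_backtrack on_circle unit_step s0 hi turn.
  case: (ltnP i 4) => i4.
    by apply: (distinct i i.+2 _ (esym ex) (esym ey)); lia.
  have i_4 : i = 4%N by lia.
  by rewrite i_4 x6 y6 in ex ey; apply: (distinct 0%N 4%N isT ex ey).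
pose w : RR[i] := ((s - 1 / 2) / s +i* (cross x y 0 / s))%C.
have rot : forall k, (k <= 6)%N -> walk_point x y k = walk_point x y 0 * w ^+ k.
  exact: walk_rotation on_circle unit_step s0 cross_const.
have z0 : walk_point x y 0 != 0.
  apply/negP; rewrite eq_complex /= => /andP [/eqP ex /eqP ey].
  by move: (on_circle 0%N isT); rewrite ex ey => h; move: s_gt0; rewrite -h; lra.
have not_back k : (0 < k < 6)%N -> w ^+ k != 1.
  move=> /andP [k0 k6]; apply/negP => /eqP wk.
  have := rot k (ltnW k6); rewrite wk mulr1 => /eqP.
  by rewrite eq_complex /= => /andP [/eqP ex /eqP ey]; apply: (distinct 0%N k); rewrite ?k0.
have w6 : w ^+ 6 = 1.
  by apply: (mulfI z0); rewrite -rot // mulr1 /walk_point x6 y6.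
have := sixth_root_re w6 (not_back 2%N isT) (not_back 3%N isT); rewrite /w /=.
by move=> /(congr1 ( *%R^~ s)) /=; rewrite divfK //; lra.
Qed.

Lemma no_planar_sph_hexagon : ~ sph_admits (cycle_adj 6) 2.
Proof.
move=> [r [r1 [f [c [[inj [unit _]] sph]]]]].
pose vertex i : 'I_6 := inord (i %% 6).
pose x i := f (vertex i) ord0 ord0 - c ord0 ord0.
pose y i := f (vertex i) ord0 (lift ord0 ord0) - c ord0 (lift ord0 ord0).
have r0 : 0 <= r by rewrite -(sph ord0) sqrtr_ge0.
suff : r ^+ 2 = 1 by nra.
apply: (@closed_hexagon_walk x y) => //.
- by move=> i _; rewrite /x /y -(sph (vertex i)) edist2.
- move=> i hi; have adj : cycle_adj 6 (vertex i) (vertex i.+1).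
    case: i hi => [|[|[|[|[|[|//]]]]]] _; rewrite /cycle_adj /vertex /= !inordK //.
  rewrite -(expr1n _ 2) -(unit _ _ adj) edist2 /x /y; ring.
- move=> i j /andP [ij j6] ex ey; have i6 : (i < 6)%N by apply: ltn_trans j6.
  have /inj /(congr1 val) : f (vertex i) = f (vertex j).
    apply/rowP => k; case: k => [[|[|//]] hk].
      by rewrite (_ : Ordinal hk = ord0) ?(addIr _ ex) //; apply: val_inj.
    by rewrite (_ : Ordinal hk = lift ord0 ord0) ?(addIr _ ey) //; apply: val_inj.
  by rewrite /vertex /= !inordK ?modn_small ?ltn_pmod // => e; rewrite e ltnn in ij.
Qed.

(* The closed path 000, 100, 110, 111, 011, 001 along the edges of the unit
   cube: coordinate k of vertex i is 1 exactly when k < i <= k + 3. *)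
Definition cube_bit (i : 'I_6) (k : 'I_3) : bool := (k < i <= k + 3)%N.

Definition cube_vertex (i : 'I_6) : 'rV[RR]_3 := \row_k (cube_bit i k)%:R.

Lemma cube_bit_inj (i j : 'I_6) : (forall k, cube_bit i k = cube_bit j k) -> i = j.
Proof.
move=> eq_bits; apply: val_inj; have := eq_bits ord0; have := eq_bits (lift ord0 ord0).
have := eq_bits ord_max.
by case: i j {eq_bits} => [[|[|[|[|[|[|//]]]]]] hi] [[|[|[|[|[|[|//]]]]]] hj].
Qed.

Lemma cube_edge (u v : 'I_6) : cycle_adj 6 u v ->
  (\sum_(k < 3) (cube_bit u k != cube_bit v k))%N = 1%N.
Proof.
rewrite !big_ord_recl big_ord0.
by case: u v => [[|[|[|[|[|[|//]]]]]] hi] [[|[|[|[|[|[|//]]]]]] hj].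
Qed.

Lemma sqr_bit_diff (a b : bool) : ((a%:R : RR) - b%:R) ^+ 2 = (a != b)%:R.
Proof. by case: a; case: b => /=; ring. Qed.

Lemma sqr_bit_centre (a : bool) : ((a%:R : RR) - 1 / 2) ^+ 2 = 1 / 4.
Proof. by case: a => /=; field. Qed.

Lemma cube_sph_hexagon : sph_admits (cycle_adj 6) 3.
Proof.
have r1 : Num.sqrt (3 / 4) < 1 :> RR.
  by rewrite -[X in _ < X]sqrtr1 ltr_sqrt; lra.
apply: (sph_admits_of_sphere r1 (c := const_mx (1 / 2)) (f := cube_vertex)).
- move=> i j /rowP eq_vert; apply: cube_bit_inj => k.
  by have /eqP := eq_vert k; rewrite !mxE eqr_nat; case: cube_bit; case: cube_bit.
- move=> u v adj; apply: edist_eq_sqr; first exact: ler01.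
  rewrite edist_sq.
  under eq_bigr do rewrite !mxE sqr_bit_diff.
  by rewrite -natr_sum cube_edge // expr1n.
- move=> v; apply: edist_eq_sqr; first exact: sqrtr_ge0.
  rewrite edist_sq.
  under eq_bigr do rewrite !mxE sqr_bit_centre.
  rewrite sumr_const card_ord sqr_sqrtr; last lra.
  by rewrite -mulr_natr; field.
Qed.

Definition rcos (t : RR) : RR := cos t.
Definition rsin (t : RR) : RR := sin t.
Arguments rcos t%_ring_scope.
Arguments rsin t%_ring_scope.

Lemma rcos_sqr_add_rsin_sqr (t : RR) : rcos t ^+ 2 + rsin t ^+ 2 = 1.
Proof. by have := sin2_cos2 t; rewrite /Rsqr RplusE !RmultE -!expr2 addrC. Qed.

Lemma rcosB (a b : RR) : rcos (a - b) = rcos a * rcos b + rsin a * rsin b.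
Proof. exact: cos_minus. Qed.

Lemma rcosN (t : RR) : rcos (- t) = rcos t.
Proof. exact: cos_neg. Qed.

Lemma rcos_period (t : RR) (k : nat) : rcos (t + 2 * k%:R * PI) = rcos t.
Proof. by have := cos_period t k; rewrite /rcos INRE RplusE !RmultE IZRposE INRE. Qed.

Lemma pi_gt0 : 0 < PI :> RR.
Proof. by apply/RltP; exact: PI_RGT_0. Qed.

Lemma rcos_decr (a b : RR) : 0 <= a -> a < b -> b <= PI -> rcos b < rcos a.
Proof.
move=> a0 ab bpi; have api : a <= PI by lra.
have b0 : 0 <= b by lra.
by apply/RltP/cos_decreasing_1; [apply/RleP .. | apply/RltP].
Qed.

Lemma rcos_lt1 (t : RR) : 0 < t -> t < 2 * PI -> rcos t < 1.
Proof.
move=> t0 t2pi; have cos0 : rcos 0 = 1 by exact: cos_0.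
case: (lerP t PI) => tpi; first by rewrite -[X in _ < X]cos0 rcos_decr.
have -> : rcos t = rcos (2 * PI - t).
  by rewrite rcosB (cos_2PI : rcos (2 * PI) = 1) (sin_2PI : rsin (2 * PI) = 0); ring.
by rewrite -[X in _ < X]cos0 rcos_decr //; lra.
Qed.

Definition polar (rho t : RR) : 'rV[RR]_2 :=
  \row_(k < 2) (if k == ord0 then rho * rcos t else rho * rsin t).

Lemma polar_dist (rho a b : RR) :
  edist (polar rho a) (polar rho b) ^+ 2 = rho ^+ 2 * (2 - 2 * rcos (a - b)).
Proof.
rewrite edist2 !mxE /= rcosB.
have sa := rcos_sqr_add_rsin_sqr a; have sb := rcos_sqr_add_rsin_sqr b.
transitivity (rho ^+ 2 * ((rcos a ^+ 2 + rsin a ^+ 2) + (rcos b ^+ 2 + rsin b ^+ 2)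
    - 2 * (rcos a * rcos b + rsin a * rsin b))); first ring.
by rewrite sa sb; ring.
Qed.

Lemma polar_radius (rho t : RR) : 0 <= rho -> edist (polar rho t) 0 = rho.
Proof.
move=> rho0; apply: edist_eq_sqr => //.
rewrite edist_sq !big_ord_recl big_ord0 !mxE /= !subr0 addr0.
by rewrite !exprMn -mulrDr rcos_sqr_add_rsin_sqr mulr1.
Qed.

Lemma polar_eq (rho a b : RR) : rho != 0 -> polar rho a = polar rho b -> rcos (a - b) = 1.
Proof.
move=> rho0 eq_ab; have := polar_dist rho a b.
rewrite eq_ab edist_sq big1 => [|i _]; last by rewrite subrr expr0n.
by move/esym/eqP; rewrite mulf_eq0 sqrf_eq0 (negbTE rho0) /= => /eqP; lra.
Qed.

Section StarPolygon.

Variables n m : nat.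
Hypothesis n_gt0 : (0 < n)%N.

Definition star_angle := 2 * PI * m%:R / n%:R.

Let n_neq0 : n%:R != 0 :> RR.
Proof. by rewrite pnatr_eq0 -lt0n. Qed.

Lemma star_angle_mul_n : star_angle * n%:R = 2 * m%:R * PI.
Proof. by rewrite /star_angle; field. Qed.

(* For m coprime to n, no positive number d < n of steps makes a whole
   number of turns, since n does not divide d m. *)
Lemma star_turn_lt1 d : coprime m n -> (0 < d < n)%N -> rcos (d%:R * star_angle) < 1.
Proof.
move=> cop /andP [d0 dn]; have := divn_eq (d * m) n.
set q := (d * m %/ n)%N; set e := (d * m %% n)%N => dmE.
have e_gt0 : (0 < e)%N.
  rewrite lt0n; apply/negP => /eqP e0.
  have : (n %| d * m)%N by rewrite /dvdn -/e e0.
  by rewrite Gauss_dvdl 1?coprime_sym // => /(dvdn_leq d0); rewrite leqNgt dn.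
have e_ltn : (e < n)%N by rewrite ltn_pmod.
have -> : d%:R * star_angle = 2 * PI * e%:R / n%:R + 2 * q%:R * PI.
  have -> : d%:R * star_angle = 2 * PI * (d * m)%:R / n%:R by rewrite natrM /star_angle; field.
  by rewrite dmE natrD natrM; field.
have pi0 := pi_gt0; have eR : 0 < e%:R :> RR by rewrite ltr0n.
have en : e%:R < n%:R :> RR by rewrite ltr_nat.
rewrite rcos_period; apply: rcos_lt1.
  by apply: divr_gt0; rewrite ?ltr0n //; nra.
by rewrite ltr_pdivrMr ?ltr0n //; nra.
Qed.

Lemma star_adjacent_cos (u v : 'I_n) : val v = ((val u).+1 %% n)%N ->
  rcos (u%:R * star_angle - v%:R * star_angle) = rcos star_angle.
Proof.
case: (ltnP (val u).+1 n) => [un|nu] uv.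
  by rewrite uv modn_small // -natr1 mulrDl mul1r opprD addrA subrr add0r rcosN.
have u_last : (val u).+1 = n by apply/eqP; rewrite eqn_leq nu ltn_ord.
have v0 : val v = 0%N by rewrite uv u_last modnn.
have -> : u%:R * star_angle - v%:R * star_angle = - star_angle + 2 * m%:R * PI.
  have uR : u%:R = n%:R - 1 :> RR by rewrite -[in RHS]u_last -natr1 addrK.
  by rewrite v0 uR -star_angle_mul_n; ring.
by rewrite rcos_period rcosN.
Qed.

(* For n/6 < m <= n/2 the step angle lies in (pi/3, pi], so its cosine is
   below 1/2. *)
Lemma star_angle_cos_lt (n_lt : (n < 6 * m)%N) (m_le : (2 * m <= n)%N) :
  rcos star_angle < 1 / 2.
Proof.
have pi0 := pi_gt0; have nR : 0 < n%:R :> RR by rewrite ltr0n.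
have n6 : n%:R < 6 * m%:R :> RR by rewrite -natrM ltr_nat.
have m2 : 2 * m%:R <= n%:R :> RR by rewrite -natrM ler_nat.
rewrite -(cos_PI3 : rcos (PI / 3) = 1 / 2) rcos_decr //.
- by apply: divr_ge0; lra.
- by rewrite /star_angle ltr_pdivlMr //; nra.
- by rewrite /star_angle ler_pdivrMr //; nra.
Qed.

Lemma star_polygon_sph :
  coprime m n -> (n < 6 * m)%N -> (2 * m <= n)%N -> sph_admits (cycle_adj n) 2.
Proof.
move=> cop n_lt m_le; have cos_lt := star_angle_cos_lt n_lt m_le.
pose K := 2 - 2 * rcos star_angle.
pose rho := Num.sqrt K^-1.
have rho_sq : rho ^+ 2 = K^-1 by rewrite sqr_sqrtr // invr_ge0 /K; lra.
have rho_gt0 : 0 < rho by rewrite sqrtr_gt0 invr_gt0 /K; lra.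
have rho_lt1 : rho < 1.
  have : K^-1 < 1 by rewrite invf_lt1 /K; lra.
  by rewrite -rho_sq => ?; nra.
have rhoK : rho ^+ 2 * K = 1 by rewrite rho_sq mulVf // /K; apply: lt0r_neq0; lra.
pose vertex (j : 'I_n) := polar rho (j%:R * star_angle).
have turn_ne1 (j k : 'I_n) : (j < k)%N -> rcos (j%:R * star_angle - k%:R * star_angle) != 1.
  move=> jk; rewrite -rcosN opprB -mulrBl -natrB ?(ltnW jk) // lt_eqF // star_turn_lt1 //.
  by rewrite subn_gt0 jk /=; apply: leq_ltn_trans (leq_subr _ _) (ltn_ord k).
apply: (sph_admits_of_sphere rho_lt1 (f := vertex) (c := 0)).
- move=> j k /(polar_eq (lt0r_neq0 rho_gt0)) e; apply: val_inj.
  case: (ltngtP j k) => // jk; first by have := turn_ne1 j k jk; rewrite e eqxx.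
  by have := turn_ne1 k j jk; rewrite -rcosN opprB e eqxx.
- have edge (u v : 'I_n) : val v = ((val u).+1 %% n)%N -> edist (vertex u) (vertex v) = 1.
    move=> uv; apply: edist_eq_sqr; first exact: ler01.
    by rewrite polar_dist star_adjacent_cos // -/K rhoK expr1n.
  by move=> u v /orP [] /eqP uv; [exact: edge | rewrite edist_sym; exact: edge].
- by move=> v; apply: polar_radius; exact: ltW.
Qed.

End StarPolygon.

Lemma coprime_double_add (m k : nat) : coprime m (2 * m + k) = coprime m k.
Proof. by rewrite /coprime gcdnMDl. Qed.

(* Every n >= 3 other than 6 admits such an m: writing n = 4t + e, take
   m = 2t - 1, 2t, 2t - 1, 2t + 1 for e = 0, 1, 2, 3; then n = 2m + k with
   k in {1, 2, 4} and m odd when k is even. *)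
Lemma star_parameter (n : nat) : (3 <= n)%N -> n <> 6%N ->
  exists m : nat, [/\ coprime m n, (n < 6 * m)%N & (2 * m <= n)%N].
Proof.
move=> n3 n6; have := divn_eq n 4; have := ltn_pmod n (isT : (0 < 4)%N).
set t := (n %/ 4)%N; case: (n %% 4)%N => [|[|[|[|//]]]] _ nE; rewrite nE in n3 n6 *.
- exists (2 * t - 1)%N; split; try lia.
  rewrite (_ : (t * 4 + 0 = 2 * (2 * t - 1) + 2)%N) ?coprime_double_add; last lia.
  by rewrite coprimen2 (_ : (2 * t - 1 = (t - 1).*2.+1)%N) ?odd_double //; lia.
- exists (2 * t)%N; split; try lia.
  by rewrite (_ : (t * 4 + 1 = 2 * (2 * t) + 1)%N) ?coprime_double_add ?coprimen1 //; lia.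
- exists (2 * t - 1)%N; split; try lia.
  rewrite (_ : (t * 4 + 2 = 2 * (2 * t - 1) + 2 ^ 2)%N) ?coprime_double_add; last lia.
  rewrite coprime_pexpr // coprimen2.
  by rewrite (_ : (2 * t - 1 = (t - 1).*2.+1)%N) ?odd_double //; lia.
- exists (2 * t + 1)%N; split; try lia.
  by rewrite (_ : (t * 4 + 3 = 2 * (2 * t + 1) + 1)%N) ?coprime_double_add ?coprimen1 //; lia.
Qed.

Lemma cycle_no_sph_lt2 (n j : nat) : (3 <= n)%N -> (j < 2)%N -> ~ sph_admits (cycle_adj n) j.
Proof.
move=> n3; have n0 : (0 < n)%N by lia. have n1 : (1 < n)%N by lia.
exact: (@no_sph_admits_lt2 _ _ (Ordinal n0) (Ordinal n1) (Ordinal n3)).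
Qed.

Theorem mainTheorem6 :
  (forall n : nat, (3 <= n)%N -> n <> 6%N -> sdim_is (cycle_adj n) 2) /\
  sdim_is (cycle_adj 6) 3.
Proof.
split.
- move=> n n3 n6; split; last by move=> j; apply: cycle_no_sph_lt2.
  have [m [cop n_lt m_le]] := star_parameter n3 n6.
  by apply: (star_polygon_sph _ cop n_lt m_le); lia.
- split; first exact: cube_sph_hexagon.
  move=> [|[|[|//]]] _; try exact: cycle_no_sph_lt2.
  exact: no_planar_sph_hexagon.
Qed.
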